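(* Let $\varepsilon>0$ and $k\ge1$. There exist datasets $D_1,D_2,D_3$ with $(D_1,D_2)$ and $(D_2,D_3)$ neighboring pairs, and a sequence $Q$ of $k$ counting queries, such that running VanillaSVT$(\cdot,Q,\theta=0,\lambda,t=1)$ (described below), the output $E$ with $o_1=\dots=o_{k-1}=\bot$ and $o_k=1$ satisfies $\frac{p_{D_1}(E)}{p_{D_3}(E)}=e^{k/\lambda}$, where $p_D(E)$ is the output probability density at $E$ on input $D$. Consequently VanillaSVT with $t=1$ does not satisfy $\varepsilon$-differential privacy whenever $\lambda<\frac{k}{2\varepsilon}$.
   Context: $\mathrm{Lap}(\lambda)$ is the Laplace distribution with density $\frac{1}{2\lambda}e^{-|y|/\lambda}$. A dataset is a finite multiset of tuples; two datasets are neighboring if one is obtained by inserting one tuple into the other. A counting query counts the tuples satisfying a predicate. VanillaSVT$(D,Q=(q_1,\dots,q_k),\theta,\lambda,t)$: set $cnt=0$; draw $\hat\theta=\theta+\mathrm{Lap}(\lambda)$ once; for $i=1,\dots,k$: draw $\hat q_i(D)=q_i(D)+\mathrm{Lap}(t\lambda)$ (independent noises); if $\hat q_i(D)>\hat\theta$, output $o_i=\hat q_i(D)$, increase $cnt$ by one and stop if $cnt\ge t$; otherwise output $o_i=\bot$. An algorithm is $\varepsilon$-differentially private if for all neighboring $D,D'$ the output densities satisfy $p_D(O)\le e^{\varepsilon}p_{D'}(O)$ for all outputs $O$. *)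

From Stdlib Require Import Reals List Permutation ClassicalEpsilon.
Import ListNotations.
Open Scope R_scope.

Definition lap_pdf (b y : R) : R := / (2 * b) * exp (- Rabs y / b).

Definition lap_cdf (b y : R) : R :=
  if Rlt_dec y 0 then / 2 * exp (y / b) else 1 - / 2 * exp (- y / b).

Definition is_improper_integral (f : R -> R) (l : R) : Prop :=
  forall eps, 0 < eps -> exists M, forall a b, a <= - M -> M <= b ->
    exists pr : Riemann_integrable f a b, Rabs (RiemannInt pr - l) < eps.

(** The value of the integral (chosen classically; meaningful when it exists). *)
Definition improper_integral (f : R -> R) : R :=
  epsilon (inhabits 0) (fun l => is_improper_integral f l).

(** A dataset over tuple type [T] is a finite multiset, represented by a list
    up to permutation. *)
Definition neighboring {T : Type} (D D' : list T) : Prop :=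
  (exists x, Permutation D' (x :: D)) \/ (exists x, Permutation D (x :: D')).

Definition count_query {T : Type} (q : T -> bool) (D : list T) : R :=
  INR (length (filter q D)).

(** Outputs: a list of [None] (= ⊥) / [Some v] (= o_i = v).  Validity of an output
    sequence for query list [Q] and cutoff [t], with [cnt] positives so far:
    the algorithm runs over all queries unless it stops right after the t-th positive. *)
Fixpoint svt_valid {T : Type} (Q : list (T -> bool)) (O : list (option R))
    (t cnt : nat) : bool :=
  match Q, O with
  | [], [] => true
  | _ :: _, [] => false
  | [], _ :: _ => false
  | _ :: Q', None :: O' => svt_valid Q' O' t cnt
  | _ :: Q', Some _ :: O' =>
      if Nat.leb t (S cnt) then
        match O' with [] => true | _ => false end
      else svt_valid Q' O' t (S cnt)
  end.

(** Conditional density of the output given noisy threshold [z]; query noise Lap(b).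
    ⊥ at query q: P(q(D) + Lap(b) <= z);  value v at query q: density of
    q(D)+Lap(b) at v, provided v > z. *)
Fixpoint svt_lik {T : Type} (b z : R) (Q : list (T -> bool)) (D : list T)
    (O : list (option R)) : R :=
  match Q, O with
  | _, [] => 1
  | [], _ :: _ => 0
  | q :: Q', None :: O' => lap_cdf b (z - count_query q D) * svt_lik b z Q' D O'
  | q :: Q', Some v :: O' =>
      (if Rlt_dec z v then lap_pdf b (v - count_query q D) else 0)
      * svt_lik b z Q' D O'
  end.

(** Output density p_D(O) of VanillaSVT(D, Q, theta, lambda, t):
    the noisy threshold z = theta + Lap(lambda) is integrated out;
    query noises are Lap(t * lambda). *)
Definition svt_density {T : Type} (D : list T) (Q : list (T -> bool))
    (theta lam : R) (t : nat) (O : list (option R)) : R :=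
  if svt_valid Q O t 0 then
    improper_integral (fun z => lap_pdf lam (z - theta) * svt_lik (INR t * lam) z Q D O)
  else 0.

Definition eps_DP {T : Type} (p : list T -> list (option R) -> R) (eps : R) : Prop :=
  forall D D', neighboring D D' -> forall O, p D O <= exp eps * p D' O.

Definition svt_E (k : nat) : list (option R) := repeat None (k - 1) ++ [Some 1].

(* Take Q = k-1 queries counting {0, 2} followed by one query counting {1}, and
   D1 = {1, 0}, D2 = {0}, D3 = {2, 0}.  With theta = 0 and t = 1, the final answer
   o_k = 1 forces the noisy threshold z below 1, hence below every count of the
   first queries, so each ⊥ factor is the left Laplace tail 1/2 e^{(z - c)/lambda}.
   The density of E thus factors as a weight (1/2 e^{-c_bot/lambda})^{k-1}
   Lap_lambda(1 - c_top), depending on D only through the two counts, times an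
   integral over z that does not depend on D.  The weights of D1 and D3 differ by
   e^{(k-1)/lambda} from the ⊥ queries and by e^{1/lambda} from the last query,
   whereas two neighbouring steps of eps-DP allow at most e^{2 eps}. *)

From Stdlib Require Import Reals List Lra Lia Permutation ClassicalEpsilon FunctionalExtensionality.
From Coquelicot Require Import Coquelicot.
Import ListNotations.
Open Scope R_scope.

Lemma continuous_lap_pdf (b y : R) : continuous (lap_pdf b) y.
Proof.
apply (continuous_mult (fun _ => / (2 * b)) (fun y => exp (- Rabs y / b))).
- apply continuous_const.
- apply continuous_exp_comp.
  apply (continuous_mult (fun y => - Rabs y) (fun _ => / b)).
  + apply (continuous_opp Rabs), continuous_Rabs.
  + apply continuous_const.
Qed.

Lemma lap_pdf_pos (b y : R) : 0 < b -> 0 < lap_pdf b y.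
Proof.
intros Hb. apply Rmult_lt_0_compat; [apply Rinv_0_lt_compat; lra | apply exp_pos].
Qed.

Lemma is_lim_exp_scal_m_infty (c : R) : 0 < c -> is_lim (fun a => exp (c * a)) m_infty 0.
Proof.
intros Hc.
assert (Hc_m_infty : Rbar_plus (Rbar_mult c m_infty) 0 = m_infty).
{ simpl; destruct Rle_dec as [Hle|]; [destruct Rle_lt_or_eq_dec|]; auto; lra. }
apply (is_lim_ext (fun a => exp (c * a + 0))); [intros; rewrite Rplus_0_r; auto|].
apply is_lim_comp_lin; [rewrite Hc_m_infty; exact is_lim_exp_m | lra].
Qed.

Lemma is_improper_integral_unique (f : R -> R) (l1 l2 : R) :
  is_improper_integral f l1 -> is_improper_integral f l2 -> l1 = l2.
Proof.
intros H1 H2. destruct (Req_dec l1 l2) as [|Hne]; auto. exfalso.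
assert (Hd : 0 < Rabs (l1 - l2) / 2).
{ assert (0 < Rabs (l1 - l2)) by (apply Rabs_pos_lt; lra). lra. }
destruct (H1 _ Hd) as [M1 HM1], (H2 _ Hd) as [M2 HM2].
set (M := Rabs M1 + Rabs M2).
pose proof (RRle_abs M1). pose proof (RRle_abs M2).
pose proof (Rabs_pos M1). pose proof (Rabs_pos M2).
destruct (HM1 (- M) M) as [p1 E1]; unfold M; try lra.
destruct (HM2 (- M) M) as [p2 E2]; unfold M; try lra.
rewrite (RiemannInt_P5 p2 p1) in E2.
pose proof (Rabs_triang (RiemannInt p1 - l2) (- (RiemannInt p1 - l1))) as Htri.
rewrite Rabs_Ropp in Htri.
replace (RiemannInt p1 - l2 + - (RiemannInt p1 - l1)) with (l1 - l2) in Htri by ring.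
lra.
Qed.

Lemma improper_integral_eq (f : R -> R) (l : R) :
  is_improper_integral f l -> improper_integral f = l.
Proof.
intros H. apply (is_improper_integral_unique f); [|exact H].
unfold improper_integral. apply epsilon_spec. exists l; exact H.
Qed.

Lemma is_improper_integral_vanishing_right (f : R -> R) (u l : R) :
  (forall z, u < z -> f z = 0) -> (forall a, a < u -> ex_RInt f a u) ->
  is_lim (fun a => RInt f a u) m_infty l -> is_improper_integral f l.
Proof.
intros Hzero Hint Hlim eps Heps.
destruct (proj2 (is_lim_spec _ _ _) Hlim (mkposreal eps Heps)) as [M0 HM0].
exists (Rabs M0 + Rabs u + 1). intros a b Ha Hb.
pose proof (RRle_abs M0). pose proof (Rabs_maj2 M0).
pose proof (RRle_abs u). pose proof (Rabs_maj2 u).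
assert (Hright : is_RInt f u b 0).
{ apply (is_RInt_ext (fun _ => 0)).
  - intros z Hz. rewrite Rmin_left, Rmax_right in Hz by lra. symmetry; apply Hzero; lra.
  - pose proof (is_RInt_const u b 0) as Hc.
    rewrite (scal_zero_r (V := R_NormedModule)) in Hc. exact Hc. }
assert (Hab : ex_RInt f a b)
  by (apply (ex_RInt_Chasles f a u b); [apply Hint; lra | eexists; eauto]).
exists (ex_RInt_Reals_0 _ _ _ Hab).
rewrite <- RInt_Reals, <- (RInt_Chasles f a u b), (is_RInt_unique _ _ _ _ Hright);
  [| apply Hint; lra | eexists; eauto].
rewrite (plus_zero_r (G := R_AbelianGroup)). apply (HM0 a). lra.
Qed.

Definition lap_exp (lam : R) (n : nat) (z : R) : R := lap_pdf lam z * exp (INR n * z / lam).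

Definition svt_kernel (lam : R) (n : nat) (z : R) : R :=
  if Rlt_dec z 1 then lap_exp lam n z else 0.

(* [/ (2 (n + 1))] is the integral of [lap_exp lam n] over the negative half-line. *)
Definition kernel_mass (lam : R) (n : nat) : R :=
  / (2 * (INR n + 1)) + RInt (lap_exp lam n) 0 1.

Lemma continuous_lap_exp (lam : R) (n : nat) (z : R) : continuous (lap_exp lam n) z.
Proof.
apply (continuous_mult (lap_pdf lam) (fun z => exp (INR n * z / lam))).
- apply continuous_lap_pdf.
- apply continuous_exp_comp, (ex_derive_continuous (V := R_NormedModule)). auto_derive; auto.
Qed.

Lemma ex_RInt_lap_exp (lam : R) (n : nat) (a b : R) : ex_RInt (lap_exp lam n) a b.
Proof.
apply (ex_RInt_continuous (V := R_CompleteNormedModule)); intros; apply continuous_lap_exp.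
Qed.

Lemma lap_exp_nonneg (lam : R) (n : nat) (z : R) : 0 < lam -> 0 <= lap_exp lam n z.
Proof.
intros Hl. left. apply Rmult_lt_0_compat; [apply lap_pdf_pos, Hl | apply exp_pos].
Qed.

Lemma RInt_lap_exp_nonpos (lam : R) (n : nat) (a : R) : 0 < lam -> a <= 0 ->
  RInt (lap_exp lam n) a 0 = / (2 * (INR n + 1)) * (1 - exp ((INR n + 1) / lam * a)).
Proof.
intros Hl Ha. pose proof (pos_INR n).
set (G := fun z => / (2 * (INR n + 1)) * exp ((INR n + 1) / lam * z)).
replace (/ (2 * (INR n + 1)) * (1 - exp ((INR n + 1) / lam * a))) with (G 0 - G a)
  by (unfold G; rewrite Rmult_0_r, exp_0; ring).
apply is_RInt_unique, (is_RInt_derive G).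
- intros x Hx. rewrite Rmin_left, Rmax_right in Hx by lra.
  unfold G. auto_derive; auto.
  (* on the negative half-line [lap_pdf lam x = / (2 lam) * exp (x / lam)] *)
  unfold lap_exp, lap_pdf. rewrite Rabs_left1 by lra.
  rewrite (Rmult_assoc (/ (2 * lam))), <- exp_plus.
  replace (- - x / lam + INR n * x / lam) with ((INR n + 1) / lam * x) by (field; lra).
  field; lra.
- intros; apply continuous_lap_exp.
Qed.

Lemma ex_RInt_svt_kernel (lam : R) (n : nat) (a : R) : a < 1 -> ex_RInt (svt_kernel lam n) a 1.
Proof.
intros Ha. apply (ex_RInt_ext (lap_exp lam n)); [|apply ex_RInt_lap_exp].
intros z Hz. rewrite Rmin_left, Rmax_right in Hz by lra.
unfold svt_kernel. destruct (Rlt_dec z 1); [reflexivity | lra].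
Qed.

Lemma is_lim_RInt_svt_kernel (lam : R) (n : nat) : 0 < lam ->
  is_lim (fun a => RInt (svt_kernel lam n) a 1) m_infty (kernel_mass lam n).
Proof.
intros Hl. pose proof (pos_INR n).
apply (is_lim_ext_loc
  (fun a => / (2 * (INR n + 1)) * (1 - exp ((INR n + 1) / lam * a)) + RInt (lap_exp lam n) 0 1)).
- exists 0. intros a Ha.
  rewrite <- RInt_lap_exp_nonpos by lra.
  transitivity (RInt (lap_exp lam n) a 1).
  { apply (RInt_Chasles (V := R_CompleteNormedModule)); apply ex_RInt_lap_exp. }
  apply RInt_ext. intros z Hz. rewrite Rmin_left, Rmax_right in Hz by lra.
  unfold svt_kernel. destruct (Rlt_dec z 1); [reflexivity | lra].
- unfold kernel_mass. apply is_lim_plus'; [|apply is_lim_const].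
  replace (Finite (/ (2 * (INR n + 1)))) with (Rbar_mult (/ (2 * (INR n + 1))) (1 - 0))
    by (simpl; f_equal; ring).
  apply is_lim_scal_l, is_lim_minus'; [apply is_lim_const|].
  apply is_lim_exp_scal_m_infty. apply Rdiv_lt_0_compat; lra.
Qed.

Lemma kernel_mass_pos (lam : R) (n : nat) : 0 < lam -> 0 < kernel_mass lam n.
Proof.
intros Hl. pose proof (pos_INR n). unfold kernel_mass.
assert (0 < / (2 * (INR n + 1))) by (apply Rinv_0_lt_compat; lra).
assert (0 <= RInt (lap_exp lam n) 0 1).
{ apply RInt_ge_0; [lra | apply ex_RInt_lap_exp | intros; apply lap_exp_nonneg; exact Hl]. }
lra.
Qed.

Lemma is_improper_integral_scal_svt_kernel (lam c : R) (n : nat) : 0 < lam ->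
  is_improper_integral (fun z => c * svt_kernel lam n z) (c * kernel_mass lam n).
Proof.
intros Hl. apply (is_improper_integral_vanishing_right _ 1).
- intros z Hz. unfold svt_kernel. destruct (Rlt_dec z 1); [lra | ring].
- intros a Ha. apply (ex_RInt_scal (V := R_NormedModule)), ex_RInt_svt_kernel, Ha.
- apply (is_lim_ext_loc (fun a => c * RInt (svt_kernel lam n) a 1)).
  + exists 1. intros a Ha. symmetry. apply (RInt_scal (V := R_CompleteNormedModule)).
    apply ex_RInt_svt_kernel, Ha.
  + apply (is_lim_scal_l _ _ _ (kernel_mass lam n)), is_lim_RInt_svt_kernel, Hl.
Qed.

Lemma svt_valid_repeat_bot {T : Type} (q : T -> bool) (Q : list (T -> bool))
    (O : list (option R)) (t cnt n : nat) :
  svt_valid (repeat q n ++ Q) (repeat None n ++ O) t cnt = svt_valid Q O t cnt.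
Proof. induction n as [|n IH]; simpl; auto. Qed.

Lemma svt_lik_repeat_bot {T : Type} (b z : R) (q : T -> bool) (Q : list (T -> bool))
    (D : list T) (O : list (option R)) (n : nat) :
  svt_lik b z (repeat q n ++ Q) D (repeat None n ++ O) =
  lap_cdf b (z - count_query q D) ^ n * svt_lik b z Q D O.
Proof. induction n as [|n IH]; simpl; [ring | rewrite IH; ring]. Qed.

Lemma exp_pow (x : R) (n : nat) : exp x ^ n = exp (INR n * x).
Proof.
induction n as [|n IH]; [simpl; rewrite Rmult_0_l, exp_0; reflexivity|].
rewrite <- tech_pow_Rmult, IH, <- exp_plus, S_INR. f_equal; ring.
Qed.

Definition q_bot (x : nat) : bool := (x =? 0)%nat || (x =? 2)%nat.
Definition q_top (x : nat) : bool := (x =? 1)%nat.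

Definition counter_queries (n : nat) : list (nat -> bool) := repeat q_bot n ++ [q_top].

Definition counter_weight (lam : R) (n : nat) (c_bot c_top : R) : R :=
  (/ 2 * exp (- c_bot / lam)) ^ n * lap_pdf lam (1 - c_top).

Lemma svt_density_counter_queries (D : list nat) (lam : R) (n : nat) :
  0 < lam -> 1 <= count_query q_bot D ->
  svt_density D (counter_queries n) 0 lam 1 (svt_E (S n)) =
  counter_weight lam n (count_query q_bot D) (count_query q_top D) * kernel_mass lam n.
Proof.
intros Hl Hbot. unfold svt_density, svt_E, counter_queries.
replace (S n - 1)%nat with n by lia.
rewrite svt_valid_repeat_bot. simpl svt_valid.
apply improper_integral_eq.
replace (fun z => lap_pdf lam (z - 0) * svt_lik (INR 1 * lam) z (repeat q_bot n ++ [q_top]) D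
                    (repeat None n ++ [Some 1]))
  with (fun z => counter_weight lam n (count_query q_bot D) (count_query q_top D)
                 * svt_kernel lam n z).
{ apply is_improper_integral_scal_svt_kernel, Hl. }
apply functional_extensionality. intros z.
rewrite svt_lik_repeat_bot, Rminus_0_r, Rmult_1_l. simpl svt_lik.
unfold svt_kernel, lap_exp.
destruct (Rlt_dec z 1) as [Hz|]; [|ring].
(* below the cutoff [z < 1 <= count_query q_bot D] every ⊥ factor is a left Laplace tail *)
unfold lap_cdf. destruct (Rlt_dec (z - count_query q_bot D) 0); [|lra].
replace (/ 2 * exp ((z - count_query q_bot D) / lam))
  with (/ 2 * exp (- count_query q_bot D / lam) * exp (z / lam))
  by (rewrite Rmult_assoc, <- exp_plus; f_equal; f_equal; field; lra).
rewrite Rpow_mult_distr, exp_pow.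
replace (INR n * (z / lam)) with (INR n * z / lam) by (field; lra).
unfold counter_weight. ring.
Qed.

Lemma counter_weight_ratio (lam : R) (n : nat) : 0 < lam ->
  counter_weight lam n 1 1 = exp (INR (S n) / lam) * counter_weight lam n 2 0.
Proof.
intros Hl. unfold counter_weight, lap_pdf.
rewrite !Rpow_mult_distr, !exp_pow.
replace (1 - 1) with 0 by ring. replace (1 - 0) with 1 by ring.
rewrite Rabs_R0, Rabs_R1.
transitivity ((/ 2) ^ n * / (2 * lam)
  * exp (INR n * (- (1) / lam) + - 0 / lam)); [rewrite exp_plus; ring|].
transitivity ((/ 2) ^ n * / (2 * lam)
  * exp (INR (S n) / lam + (INR n * (- (2) / lam) + - (1) / lam))); [|rewrite !exp_plus; ring].
rewrite S_INR. f_equal. f_equal. field. lra.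
Qed.

Lemma svt_density_counter_ratio (lam : R) (n : nat) : 0 < lam ->
  0 < svt_density [2; 0]%nat (counter_queries n) 0 lam 1 (svt_E (S n)) /\
  svt_density [1; 0]%nat (counter_queries n) 0 lam 1 (svt_E (S n))
    = exp (INR (S n) / lam) * svt_density [2; 0]%nat (counter_queries n) 0 lam 1 (svt_E (S n)).
Proof.
intros Hl.
assert (C1 : count_query q_bot [1; 0]%nat = 1 /\ count_query q_top [1; 0]%nat = 1)
  by (unfold count_query; simpl; split; ring).
assert (C3 : count_query q_bot [2; 0]%nat = 2 /\ count_query q_top [2; 0]%nat = 0)
  by (unfold count_query; simpl; split; ring).
rewrite !svt_density_counter_queries, (proj1 C1), (proj2 C1), (proj1 C3), (proj2 C3),
  counter_weight_ratio by (exact Hl || lra).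
split; [|ring].
apply Rmult_lt_0_compat; [|apply kernel_mass_pos, Hl].
apply Rmult_lt_0_compat; [apply pow_lt | apply lap_pdf_pos, Hl].
apply Rmult_lt_0_compat; [lra | apply exp_pos].
Qed.

Lemma eps_DP_two_steps {T : Type} (p : list T -> list (option R) -> R) (eps : R)
    (D1 D2 D3 : list T) (O : list (option R)) :
  eps_DP p eps -> neighboring D1 D2 -> neighboring D2 D3 ->
  p D1 O <= exp (2 * eps) * p D3 O.
Proof.
intros Hdp H12 H23.
pose proof (Hdp _ _ H12 O). pose proof (Hdp _ _ H23 O).
replace (2 * eps) with (eps + eps) by ring. rewrite exp_plus.
pose proof (exp_pos eps). nra.
Qed.

Lemma exp_lt_of_lt_div (x eps lam : R) : 0 < eps -> 0 < lam ->
  lam < x / (2 * eps) -> exp (2 * eps) < exp (x / lam).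
Proof.
intros Heps Hl Hlt. apply exp_increasing.
apply Rmult_lt_compat_r with (r := 2 * eps / lam) in Hlt; [|apply Rdiv_lt_0_compat; lra].
replace (lam * (2 * eps / lam)) with (2 * eps) in Hlt by (field; lra).
replace (x / (2 * eps) * (2 * eps / lam)) with (x / lam) in Hlt by (field; lra).
exact Hlt.
Qed.

Theorem mainTheorem10 (eps : R) (k : nat) (lam : R) :
  0 < eps -> (1 <= k)%nat -> 0 < lam ->
  (exists (D1 D2 D3 : list nat) (Q : list (nat -> bool)),
      neighboring D1 D2 /\ neighboring D2 D3 /\ length Q = k /\
      0 < svt_density D3 Q 0 lam 1 (svt_E k) /\
      svt_density D1 Q 0 lam 1 (svt_E k) / svt_density D3 Q 0 lam 1 (svt_E k)
        = exp (INR k / lam))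
  /\
  (lam < INR k / (2 * eps) ->
     ~ (forall Q : list (nat -> bool), length Q = k ->
          eps_DP (fun D O => svt_density D Q 0 lam 1 O) eps)).
Proof.
intros Heps Hk Hl. destruct k as [|n]; [lia|].
assert (N12 : neighboring [1; 0]%nat [0]%nat) by (right; exists 1%nat; reflexivity).
assert (N23 : neighboring [0]%nat [2; 0]%nat) by (left; exists 2%nat; reflexivity).
assert (Hlen : length (counter_queries n) = S n)
  by (unfold counter_queries; rewrite length_app, repeat_length; simpl; lia).
destruct (svt_density_counter_ratio lam n Hl) as [Hp3 Hp1].
split.
- exists [1; 0]%nat, [0]%nat, [2; 0]%nat, (counter_queries n).
  repeat split; auto. rewrite Hp1. field. lra.
- intros Hlt Hdp.
  pose proof (eps_DP_two_steps _ eps _ _ _ (svt_E (S n)) (Hdp _ Hlen) N12 N23) as Hgroup.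
  cbv beta in Hgroup. rewrite Hp1 in Hgroup.
  pose proof (exp_lt_of_lt_div (INR (S n)) eps lam Heps Hl Hlt).
  nra.
Qed.
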